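(* Let $(\vec f,\vec\theta,\rho,\vec{\mathcal J})$ be a Definitional SMTO problem over a background theory $T$. Assume that $T$-satisfiability of quantifier-free formulas with uninterpreted functions is decidable, and that the SMT solver called in Algorithm 1 is a decision procedure for it, always returning SAT with a model or UNSAT. Assume further that every oracle function symbol $\theta_i$ has a finite domain, i.e. there are only finitely many tuples of input values on which $\theta_i$ can be applied. Then Algorithm 1 terminates on this problem.
   Context: Notation: for an expression $e$ with a free variable $x$, $e\cdot\{x\to t\}$ denotes proper substitution of $x$ by $t$. The symbol $\approx$ denotes equality. An oracle interface is a tuple $\mathcal I=(\vec y,\vec z,\alpha_{gen},\beta_{gen})$, where $\vec y$ and $\vec z$ are lists of sorted variables and $\alpha_{gen},\beta_{gen}$ are formulas whose free variables are among $\vec y,\vec z$. Its associated oracle maps tuples of values of the sorts of $\vec y$ to tuples of values of the sorts of $\vec z$. An oracle interface $\mathcal J$ defines an oracle function symbol $\theta$ if it has the form $((y_1,\dots,y_j),(z),\ \theta(y_1,\dots,y_j)\approx z,\ \text{true})$ and its associated oracle is functional, i.e. it always returns the same output on the same input; calling it on $\vec c$ with result $d$ generates the assumption $\theta(\vec c)\approx d$. A Definitional SMTO problem is a tuple $(\vec f,\vec\theta,\rho,\vec{\mathcal J})$, where $\vec f$ are ordinary function symbols, $\vec\theta=(\theta_1,\dots,\theta_n)$ are oracle function symbols, $\rho$ is a formula in background theory $T$ whose free function symbols are $\vec f\uplus\vec\theta$, and $\vec{\mathcal J}=(\mathcal J_1,\dots,\mathcal J_n)$ with $\mathcal J_i$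 defining $\theta_i$. Notation for the algorithm: $e[t]$ denotes an expression with a subterm $t$, and $e[s]$ denotes the result of replacing that subterm by $s$. $\langle t\rangle$ denotes partial evaluation of $t$, i.e. evaluating every subterm built from interpreted symbols applied to values; for example $\langle\theta(1+1)+1\rangle=\theta(2)+1$. $M|_{\vec f}$ is the restriction of a model $M$ to $\vec f$, and $\vec f^M$ is the interpretation of $\vec f$ in $M$. Algorithm 1 (SMTO). Initialize $A:=\text{true}$. Then repeat the following forever: 1. Call the SMT solver on $\rho\wedge A$, treating $\vec\theta$ as uninterpreted functions. If the result is UNSAT, return (UNSAT, $A$). 2. Otherwise, let $M$ be the model returned and set $\mu:=\langle\rho\cdot\{\vec f\to\vec f^M\}\rangle$. 3. While $\mu$ has the form $\mu[\theta_i(\vec c)]$ with $\vec c$ a tuple of values: - if $\theta_i(\vec c)\approx d$ is already in $A$ for some $d$, set $\mu:=\langle\mu[d]\rangle$; - otherwise call the oracle of $\mathcal J_i$ on $\vec c$ to obtain $d$, add $\theta_i(\vec c)\approx d$ to $A$, and set $\mu:=\langle\mu[d]\rangle$. 4. If $\mu$ is the formula true, return (SAT, $A$, $M|_{\vec f}$). Otherwise continue with the next iteration of the loop. *)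

From mathcomp Require Import all_boot.
Set Implicit Arguments.
Unset Strict Implicit.
Unset Printing Implicit Defensive.

Record theory := Theory {
  tsort  : eqType;
  tval   : eqType;
  sortOf : tval -> tsort;
  tsB    : tsort;
  tvtt   : tval;
  tvff   : tval;
  isym   : Type;
  isig   : isym -> seq tsort * tsort;       (* their (argument sorts, result sort) *)
  interp : isym -> seq tval -> tval
}.

Definition theory_ok (T : theory) : Prop :=
  [/\ sortOf (tvtt T) = tsB T, sortOf (tvff T) = tsB T, tvtt T != tvff T &
      forall g vs, map (@sortOf T) vs = (isig g).1 ->
                   sortOf (interp g vs) = (isig g).2].

(* TFun j ts : application of the ordinary function symbol f_j,
   TOrc i ts : application of the oracle function symbol theta_i,
   TEq, TAnd : equality (≈) and conjunction (formulas are Boolean terms). *)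
Inductive term (T : theory) :=
| TVal of tval T
| TApp of isym T & seq (term T)
| TFun of nat & seq (term T)
| TOrc of nat & seq (term T)
| TEq  of term T & term T
| TAnd of term T & term T.

Arguments TVal {T}.
Arguments TApp {T}.
Arguments TFun {T}.
Arguments TOrc {T}.
Arguments TEq {T}.
Arguments TAnd {T}.

(* Interpretation of the uninterpreted symbols (the f's and the theta's). *)
Record model (T : theory) := Model {
  mf : nat -> seq (tval T) -> tval T;
  mo : nat -> seq (tval T) -> tval T
}.

(* A Definitional SMTO problem (f, theta, rho, J): f = f_0..f_{nf-1} with
   signatures fsig, theta = theta_0..theta_{nor-1} with signatures osig,
   the formula rho, and the functional oracles of the interfaces J_i
   (oracle i c = the output d of the oracle of J_i on input c). *)
Record problem (T : theory) := Problem {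
  nf     : nat;
  fsig   : nat -> seq (tsort T) * tsort T;
  nor    : nat;
  osig   : nat -> seq (tsort T) * tsort T;
  rho    : term T;
  oracle : nat -> seq (tval T) -> tval T
}.

Section SMTO.
Variable T : theory.
Variable P : problem T.

Local Notation term := (term T).
Local Notation V := (tval T).
Local Notation vtt := (tvtt T).
Local Notation vff := (tvff T).

Definition vbool (b : bool) : V := if b then vtt else vff.

Fixpoint sort_of (t : term) : option (tsort T) :=
  match t with
  | TVal v => Some (sortOf v)
  | TApp g ts => if map sort_of ts == map Some (isig g).1
                 then Some (isig g).2 else None
  | TFun j ts => if map sort_of ts == map Some (fsig P j).1
                 then Some (fsig P j).2 else None
  | TOrc i ts => if map sort_of ts == map Some (osig P i).1
                 then Some (osig P i).2 else None
  | TEq t u => match sort_of t, sort_of u with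
               | Some a, Some b => if a == b then Some (tsB T) else None
               | _, _ => None
               end
  | TAnd t u => if (sort_of t == Some (tsB T)) && (sort_of u == Some (tsB T))
                then Some (tsB T) else None
  end.

Fixpoint syms_ok (t : term) : bool :=
  match t with
  | TVal _ => true
  | TApp _ ts => all syms_ok ts
  | TFun j ts => (j < nf P) && all syms_ok ts
  | TOrc i ts => (i < nor P) && all syms_ok ts
  | TEq t u => syms_ok t && syms_ok u
  | TAnd t u => syms_ok t && syms_ok u
  end.

Definition model_ok (M : model T) : Prop :=
  (forall j vs, map (@sortOf T) vs = (fsig P j).1 ->
                sortOf (mf M j vs) = (fsig P j).2) /\
  (forall i vs, map (@sortOf T) vs = (osig P i).1 ->
                sortOf (mo M i vs) = (osig P i).2).

Fixpoint eval (M : model T) (t : term) : V :=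
  match t with
  | TVal v => v
  | TApp g ts => interp g (map (eval M) ts)
  | TFun j ts => mf M j (map (eval M) ts)
  | TOrc i ts => mo M i (map (eval M) ts)
  | TEq t u => vbool (eval M t == eval M u)
  | TAnd t u => vbool ((eval M t == vtt) && (eval M u == vtt))
  end.

(* T-satisfiability (theta treated as uninterpreted) *)
Definition satisfiable (phi : term) : Prop :=
  exists M, model_ok M /\ eval M phi = vtt.

Definition problem_ok : Prop :=
  [/\ sort_of (rho P) = Some (tsB T), syms_ok (rho P) &
      forall i vs, i < nor P -> map (@sortOf T) vs = (osig P i).1 ->
                   sortOf (oracle P i vs) = (osig P i).2].

Definition finite_domains : Prop :=
  forall i, i < nor P -> exists D : seq (seq V),
    forall cs, map (@sortOf T) cs = (osig P i).1 -> cs \in D.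

Definition solver_spec (solver : term -> option (model T)) : Prop :=
  forall phi, sort_of phi = Some (tsB T) ->
    (solver phi = None -> ~ satisfiable phi) /\
    (forall M, solver phi = Some M -> model_ok M /\ eval M phi = vtt).

(* partial evaluation <.> of a term after substituting f by f^M (given as mfM):
   every subterm built from an interpreted symbol (or an f_j, now interpreted
   by f^M) applied to values is evaluated; theta-applications are kept. *)
Fixpoint getvals (ts : seq term) : option (seq V) :=
  match ts with
  | [::] => Some [::]
  | TVal v :: ts' => omap (cons v) (getvals ts')
  | _ => None
  end.

Fixpoint peval (mfM : nat -> seq V -> V) (t : term) : term :=
  match t with
  | TVal v => TVal v
  | TApp g ts => let ts' := map (peval mfM) ts in
                 match getvals ts' with
                 | Some vs => TVal (interp g vs)
                 | None => TApp g ts'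
                 end
  | TFun j ts => let ts' := map (peval mfM) ts in
                 match getvals ts' with
                 | Some vs => TVal (mfM j vs)
                 | None => TFun j ts'
                 end
  | TOrc i ts => TOrc i (map (peval mfM) ts)
  | TEq t u => match peval mfM t, peval mfM u with
               | TVal a, TVal b => TVal (vbool (a == b))
               | t', u' => TEq t' u'
               end
  | TAnd t u => match peval mfM t, peval mfM u with
                | TVal a, TVal b => TVal (vbool ((a == vtt) && (b == vtt)))
                | t', u' => TAnd t' u'
                end
  end.

Fixpoint inl (t : term) (ts : seq term) : Prop :=
  match ts with [::] => False | u :: ts' => u = t \/ inl t ts' end.

Inductive occurs (s : term) : term -> Prop :=
| occ_here : occurs s s
| occ_app g ts t : inl t ts -> occurs s t -> occurs s (TApp g ts)
| occ_fun j ts t : inl t ts -> occurs s t -> occurs s (TFun j ts)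
| occ_orc i ts t : inl t ts -> occurs s t -> occurs s (TOrc i ts)
| occ_eql t u : occurs s t -> occurs s (TEq t u)
| occ_eqr t u : occurs s u -> occurs s (TEq t u)
| occ_andl t u : occurs s t -> occurs s (TAnd t u)
| occ_andr t u : occurs s u -> occurs s (TAnd t u).

(* repl1 s r e e' : e' is e[r] where e = e[s] (one occurrence of s replaced) *)
Inductive repl1 (s r : term) : term -> term -> Prop :=
| repl_here : repl1 s r s r
| repl_app g l1 t t' l2 : repl1 s r t t' ->
    repl1 s r (TApp g (l1 ++ t :: l2)) (TApp g (l1 ++ t' :: l2))
| repl_fun j l1 t t' l2 : repl1 s r t t' ->
    repl1 s r (TFun j (l1 ++ t :: l2)) (TFun j (l1 ++ t' :: l2))
| repl_orc i l1 t t' l2 : repl1 s r t t' ->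
    repl1 s r (TOrc i (l1 ++ t :: l2)) (TOrc i (l1 ++ t' :: l2))
| repl_eql t t' u : repl1 s r t t' -> repl1 s r (TEq t u) (TEq t' u)
| repl_eqr t u u' : repl1 s r u u' -> repl1 s r (TEq t u) (TEq t u')
| repl_andl t t' u : repl1 s r t t' -> repl1 s r (TAnd t u) (TAnd t' u)
| repl_andr t u u' : repl1 s r u u' -> repl1 s r (TAnd t u) (TAnd t u').

Definition ocall (i : nat) (c : seq V) : term := TOrc i (map TVal c).

Definition has_ocall (mu : term) : Prop := exists i c, occurs (ocall i c) mu.

(* the set A of assumptions theta_i(c) ≈ d, as a list of triples (i, c, d) *)
Definition asm := (nat * seq V * V)%type.

Definition asm_formula (a : asm) : term := TEq (ocall a.1.1 a.1.2) (TVal a.2).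

Definition rho_and (A : seq asm) : term :=
  foldl (fun acc a => TAnd acc (asm_formula a)) (rho P) A.

Fixpoint lookupA (A : seq asm) (i : nat) (c : seq V) : option V :=
  match A with
  | [::] => None
  | a :: A' => if (a.1.1 == i) && (a.1.2 == c) then Some a.2 else lookupA A' i c
  end.

Inductive state :=
| Outer of seq asm                          (* start of a loop iteration *)
| Inner of seq asm & model T & term         (* in the while-loop of step 3 *)
| RetUnsat of seq asm                       (* returned (UNSAT, A) *)
| RetSat of seq asm & (nat -> seq V -> V).  (* returned (SAT, A, M|_f) *)

Variable solver : term -> option (model T).

Inductive step : state -> state -> Prop :=
| st_unsat A : solver (rho_and A) = None -> step (Outer A) (RetUnsat A)
| st_sat A M : solver (rho_and A) = Some M ->
    step (Outer A) (Inner A M (peval (mf M) (rho P)))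
| st_known A M mu mu' i c d :
    lookupA A i c = Some d -> repl1 (ocall i c) (TVal d) mu mu' ->
    step (Inner A M mu) (Inner A M (peval (mf M) mu'))
| st_call A M mu mu' i c :
    lookupA A i c = None ->
    repl1 (ocall i c) (TVal (oracle P i c)) mu mu' ->
    step (Inner A M mu)
         (Inner (rcons A (i, c, oracle P i c)) M (peval (mf M) mu'))
| st_true A M mu : ~ has_ocall mu -> mu = TVal vtt ->
    step (Inner A M mu) (RetSat A (mf M))
| st_next A M mu : ~ has_ocall mu -> mu <> TVal vtt ->
    step (Inner A M mu) (Outer A).

(* Algorithm 1 terminates: every run from the initial state (A := true) is
   finite, i.e. the initial state is accessible for the converse of step. *)
Definition terminates : Prop :=
  Acc (fun s' s => step s s') (Outer [::]).

End SMTO.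

From Pilot Require Import Defs.
From mathcomp Require Import all_boot.
From Stdlib Require Import Lia.
From mathcomp Require Import zify.
Set Implicit Arguments.
Unset Strict Implicit.
Unset Printing Implicit Defensive.

(* Two measures drive the proof.  Within one iteration (the while-loop of
   step 3) every transition replaces an oracle call theta_i(c) by a value and
   partially evaluates, so the number of oracle applications in mu strictly
   decreases.  Across iterations, the assumption list A never records the same
   input (i, c) twice and all its inputs lie in the finite domains, so |A| is
   bounded; and an iteration that goes back to step 1 must have enlarged A:
   if it called no oracle, then the solver's model M of rho /\ A agrees with
   every assumption looked up, so every intermediate mu evaluates to true in M
   and the final, oracle-free mu -- which is a value -- is the value true,
   whence the algorithm returns SAT instead. *)

Section Terms.
Variable T : theory.
Local Notation value := (Defs.tval T).
Implicit Types (s r t u e : term T) (ts : seq (term T)) (f : nat -> seq value -> value).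

(* Induction on terms with a hypothesis for every argument of an application
   (the automatically generated principle ignores nested lists). *)
Lemma term_ind' (Q : term T -> Prop) :
  (forall v, Q (TVal v)) ->
  (forall g ts, (forall t, inl t ts -> Q t) -> Q (TApp g ts)) ->
  (forall j ts, (forall t, inl t ts -> Q t) -> Q (TFun j ts)) ->
  (forall i ts, (forall t, inl t ts -> Q t) -> Q (TOrc i ts)) ->
  (forall t u, Q t -> Q u -> Q (TEq t u)) ->
  (forall t u, Q t -> Q u -> Q (TAnd t u)) -> forall t, Q t.
Proof.
move=> HV HA HF HO HE HN; fix IH 1.
case=> [v|g ts|j ts|i ts|t u|t u].
- exact: HV.
- apply: HA; move: ts; fix IHs 1; case=> [|t0 ts] t; first by case.
  by case=> [<-|Ht]; [exact: IH | exact: IHs ts t Ht].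
- apply: HF; move: ts; fix IHs 1; case=> [|t0 ts] t; first by case.
  by case=> [<-|Ht]; [exact: IH | exact: IHs ts t Ht].
- apply: HO; move: ts; fix IHs 1; case=> [|t0 ts] t; first by case.
  by case=> [<-|Ht]; [exact: IH | exact: IHs ts t Ht].
- exact: HE.
- exact: HN.
Qed.

Lemma inl_map (h : term T -> term T) t ts : inl t ts -> inl (h t) (map h ts).
Proof. by elim: ts => [|u ts IH] //= [<-|Ht]; [left | right; exact: IH]. Qed.

Lemma inl_map_inv (h : term T -> term T) t' ts :
  inl t' (map h ts) -> exists2 t, inl t ts & t' = h t.
Proof.
elim: ts => [|u ts IH] //= [<-|/IH[t Ht ->]]; first by exists u; first left.
by exists t; first right.
Qed.

Lemma inl_all (p : pred (term T)) t ts : inl t ts -> all p ts -> p t.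
Proof. by elim: ts => [|u ts IH] //= [<-|/IH Ht] /andP[]. Qed.

Lemma inl_mid t ts1 ts2 : inl t (ts1 ++ t :: ts2).
Proof. by elim: ts1 => [|u ts1 IH] /=; [left | right]. Qed.

Lemma map_inl_ext (A : Type) (h : term T -> A) (k : term T -> term T) ts :
  (forall t, inl t ts -> h (k t) = h t) -> map h (map k ts) = map h ts.
Proof.
elim: ts => [|u ts IH] //= Hk; rewrite Hk; last by left.
by rewrite IH // => t Ht; apply: Hk; right.
Qed.

Lemma all_map_inl (p : pred (term T)) (k : term T -> term T) ts :
  (forall t, inl t ts -> p t -> p (k t)) -> all p ts -> all p (map k ts).
Proof.
elim: ts => [|u ts IH] //= Hk /andP[Hu Hts]; rewrite Hk //=; last by left.
by rewrite IH // => t Ht; apply: Hk; right.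
Qed.

Lemma getvals_map ts vs : getvals ts = Some vs -> ts = map TVal vs.
Proof.
elim: ts vs => [|[v|g l|j l|i l|a b|a b] ts IH] vs //=; first by case=> <-.
by case E: (getvals ts) => [vs'|] //= [<-]; rewrite (IH _ E).
Qed.

Lemma getvals_all ts :
  (forall t, inl t ts -> exists v, t = TVal v) -> exists vs, getvals ts = Some vs.
Proof.
elim: ts => [|u ts IH] Hv; first by exists [::].
have [v ->] := Hv u (or_introl erefl).
have [vs E] := IH (fun t Ht => Hv t (or_intror Ht)).
by exists (v :: vs); rewrite /= E.
Qed.

(* Number of oracle applications in a term: the measure of the inner loop. *)
Fixpoint ocount t : nat :=
  match t with
  | TVal _ => 0
  | TApp _ ts | TFun _ ts => sumn (map ocount ts)
  | TOrc _ ts => (sumn (map ocount ts)).+1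
  | TEq t u | TAnd t u => ocount t + ocount u
  end.

Lemma sumn_ocount_map (k : term T -> term T) ts :
  (forall t, inl t ts -> ocount (k t) <= ocount t) ->
  sumn (map ocount (map k ts)) <= sumn (map ocount ts).
Proof.
elim: ts => [|u ts IH] //= Hk; apply: leq_add; first by apply: Hk; left.
by apply: IH => t Ht; apply: Hk; right.
Qed.

Lemma peval_TApp f g ts :
  (getvals (map (peval f) ts) = None /\
     peval f (TApp g ts) = TApp g (map (peval f) ts)) \/
  exists vs, getvals (map (peval f) ts) = Some vs /\
     peval f (TApp g ts) = TVal (interp g vs).
Proof. by rewrite /=; case: getvals => [vs|]; [right; exists vs | left]. Qed.

Lemma peval_TFun f j ts :
  (getvals (map (peval f) ts) = None /\
     peval f (TFun j ts) = TFun j (map (peval f) ts)) \/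
  exists vs, getvals (map (peval f) ts) = Some vs /\
     peval f (TFun j ts) = TVal (f j vs).
Proof. by rewrite /=; case: getvals => [vs|]; [right; exists vs | left]. Qed.

Lemma peval_TEq f t u :
  peval f (TEq t u) = TEq (peval f t) (peval f u) \/
  exists a b, [/\ peval f t = TVal a, peval f u = TVal b &
                  peval f (TEq t u) = TVal (vbool T (a == b))].
Proof.
rewrite /=; case: (peval f t) => [a|*|*|*|*|*]; case: (peval f u) => [b|*|*|*|*|*];
  by [left | right; exists a, b].
Qed.

Lemma peval_TAnd f t u :
  peval f (TAnd t u) = TAnd (peval f t) (peval f u) \/
  exists a b, [/\ peval f t = TVal a, peval f u = TVal b &
      peval f (TAnd t u) = TVal (vbool T ((a == tvtt T) && (b == tvtt T)))].
Proof.
rewrite /=; case: (peval f t) => [a|*|*|*|*|*]; case: (peval f u) => [b|*|*|*|*|*];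
  by [left | right; exists a, b].
Qed.

Lemma peval_eval (M : model T) t : eval M (peval (mf M) t) = eval M t.
Proof.
elim/term_ind': t => [v|g ts IH|j ts IH|i ts IH|t u IH1 IH2|t u IH1 IH2] //.
- have E := map_inl_ext IH.
  case: (peval_TApp (mf M) g ts) => [[_ ->]|[vs [Hvs ->]]] /=; first by rewrite E.
  by rewrite -E (getvals_map Hvs) -map_comp map_id_in.
- have E := map_inl_ext IH.
  case: (peval_TFun (mf M) j ts) => [[_ ->]|[vs [Hvs ->]]] /=; first by rewrite E.
  by rewrite -E (getvals_map Hvs) -map_comp map_id_in.
- by rewrite /= (map_inl_ext IH).
- case: (peval_TEq (mf M) t u) => [->|[a [b [Ha Hb ->]]]] /=; first by rewrite IH1 IH2.
  by rewrite -IH1 -IH2 Ha Hb.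
- case: (peval_TAnd (mf M) t u) => [->|[a [b [Ha Hb ->]]]] /=; first by rewrite IH1 IH2.
  by rewrite -IH1 -IH2 Ha Hb.
Qed.

Lemma ocount_peval f t : ocount (peval f t) <= ocount t.
Proof.
elim/term_ind': t => [v|g ts IH|j ts IH|i ts IH|t u IH1 IH2|t u IH1 IH2] //.
- by case: (peval_TApp f g ts) => [[_ ->]|[vs [_ ->]]] //=; apply: sumn_ocount_map.
- by case: (peval_TFun f j ts) => [[_ ->]|[vs [_ ->]]] //=; apply: sumn_ocount_map.
- by rewrite /= ltnS; apply: sumn_ocount_map.
- by case: (peval_TEq f t u) => [->|[a [b [_ _ ->]]]] //=; apply: leq_add.
- by case: (peval_TAnd f t u) => [->|[a [b [_ _ ->]]]] //=; apply: leq_add.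
Qed.

Lemma has_ocall_sub e (e' : term T) :
  (forall s, occurs s e -> occurs s e') -> has_ocall e -> has_ocall e'.
Proof. by move=> Hsub [i [c Hc]]; exists i, c; apply: Hsub. Qed.

Lemma getvals_peval_args f ts e :
  (forall t, inl t ts -> ~ has_ocall (peval f t) -> exists v, peval f t = TVal v) ->
  (forall s t, inl t (map (peval f) ts) -> occurs s t -> occurs s e) ->
  ~ has_ocall e -> exists vs, getvals (map (peval f) ts) = Some vs.
Proof.
move=> IH Hocc Hno; apply: getvals_all => _ /inl_map_inv[t Ht ->].
apply: IH => // Hc; apply: Hno; apply: has_ocall_sub Hc => s.
exact: Hocc (inl_map _ Ht).
Qed.

(* A partially evaluated term without oracle calls is a value: this is why
   the while-loop of step 3 ends with a value mu. *)
Lemma peval_value f t : ~ has_ocall (peval f t) -> exists v, peval f t = TVal v.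
Proof.
elim/term_ind': t => [v|g ts IH|j ts IH|i ts IH|t u IH1 IH2|t u IH1 IH2] Hno.
- by exists v.
- case: (peval_TApp f g ts) => [[Hg E]|[vs [_ ->]]]; last by exists (interp g vs).
  rewrite E in Hno.
  have [vs] := getvals_peval_args IH (fun s t => @occ_app T s g _ t) Hno.
  by rewrite Hg.
- case: (peval_TFun f j ts) => [[Hg E]|[vs [_ ->]]]; last by exists (f j vs).
  rewrite E in Hno.
  have [vs] := getvals_peval_args IH (fun s t => @occ_fun T s j _ t) Hno.
  by rewrite Hg.
- have [vs /getvals_map Evs] :=
    getvals_peval_args IH (fun s t => @occ_orc T s i _ t) Hno.
  by case: Hno; exists i, vs; rewrite /= Evs; exact: occ_here.
- case: (peval_TEq f t u) => [E|[a [b [_ _ ->]]]]; last by eexists.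
  rewrite E in Hno.
  have [a Ha] := IH1 (fun H => Hno (has_ocall_sub (fun s => @occ_eql T s _ _) H)).
  have [b Hb] := IH2 (fun H => Hno (has_ocall_sub (fun s => @occ_eqr T s _ _) H)).
  by rewrite /= Ha Hb; eexists.
- case: (peval_TAnd f t u) => [E|[a [b [_ _ ->]]]]; last by eexists.
  rewrite E in Hno.
  have [a Ha] := IH1 (fun H => Hno (has_ocall_sub (fun s => @occ_andl T s _ _) H)).
  have [b Hb] := IH2 (fun H => Hno (has_ocall_sub (fun s => @occ_andr T s _ _) H)).
  by rewrite /= Ha Hb; eexists.
Qed.

Lemma repl_occurs s r e (e' : term T) : repl1 s r e e' -> occurs s e.
Proof.
elim=> {e e'} [|g l1 t t' l2 _ IH|j l1 t t' l2 _ IH|i l1 t t' l2 _ IH|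
               t t' u _ IH|t u u' _ IH|t t' u _ IH|t u u' _ IH].
- exact: occ_here.
- exact: occ_app (inl_mid _ _ _) IH.
- exact: occ_fun (inl_mid _ _ _) IH.
- exact: occ_orc (inl_mid _ _ _) IH.
- exact: occ_eql.
- exact: occ_eqr.
- exact: occ_andl.
- exact: occ_andr.
Qed.

Lemma repl_eval (M : model T) s r e (e' : term T) :
  repl1 s r e e' -> eval M s = eval M r -> eval M e' = eval M e.
Proof. by move=> H Hsr; elim: H => {e e'} //= *; rewrite ?map_cat /=; congruence. Qed.

Lemma repl_ocount s r e (e' : term T) :
  repl1 s r e e' -> ocount e' + ocount s = ocount e + ocount r.
Proof.
elim=> {e e'} /= [|g l1 t t' l2 _ IH|j l1 t t' l2 _ IH|i l1 t t' l2 _ IH|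
                   t t' u _ IH|t u u' _ IH|t t' u _ IH|t u u' _ IH];
  rewrite ?map_cat ?sumn_cat /=; lia.
Qed.

Lemma eval_ocall (M : model T) i c : eval M (ocall i c) = mo M i c.
Proof. by rewrite /= -map_comp map_id. Qed.

Lemma ocount_step f i c d e (e' : term T) :
  repl1 (ocall i c) (TVal d) e e' -> ocount (peval f e') < ocount e.
Proof.
move=> Hr; have := repl_ocount Hr; have := ocount_peval f e'.
rewrite /= addn0; lia.
Qed.

End Terms.

Lemma map_Some_inj (A : Type) (l1 l2 : seq A) : map Some l1 = map Some l2 -> l1 = l2.
Proof. by move/inj_map => -> // x y []. Qed.

Section WellFormed.
Variables (T : theory) (P : problem T).
Hypothesis T_ok : theory_ok T.
Local Notation value := (Defs.tval T).
Implicit Types (s r t u e : term T) (ts : seq (term T)).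

Lemma vbool_sort b : sortOf (vbool T b) = tsB T.
Proof. by case: T_ok => Htt Hff _ _; case: b. Qed.

Lemma vbool_tt b : vbool T b = tvtt T -> b.
Proof. by case: T_ok => _ _ Hne _; case: b => //= E; rewrite E eqxx in Hne. Qed.

Definition well_formed e : Prop := sort_of P e = Some (tsB T) /\ syms_ok P e.

Lemma sort_of_inl (A : Type) (g : term T -> option A) (l : seq A) t ts :
  inl t ts -> map g ts = map Some l -> exists x, g t = Some x.
Proof.
elim: ts l => [|u ts IH] [|a l] //= [<-|Ht] [E1 E2]; first by exists a.
exact: IH Ht E2.
Qed.

Lemma sort_of_map (A : Type) (g : term T -> option A) (k : term T -> term T) ts l :
  (forall t, inl t ts -> forall x, g t = Some x -> g (k t) = Some x) ->
  map g ts = map Some l -> map g (map k ts) = map Some l.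
Proof.
elim: ts l => [|u ts IH] [|a l] //= Hk [E1 E2].
rewrite (Hk u _ a E1); last by left.
by rewrite (IH l) // => t Ht; apply: Hk; right.
Qed.

Lemma peval_syms f e : syms_ok P e -> syms_ok P (peval f e).
Proof.
elim/term_ind': e => [v|g ts IH|j ts IH|i ts IH|t u IH1 IH2|t u IH1 IH2] //.
- rewrite [syms_ok P (TApp g ts)]/= => /(all_map_inl IH).
  by case: (peval_TApp f g ts) => [[_ ->]|[vs [_ ->]]].
- rewrite [syms_ok P (TFun j ts)]/= => /andP[Hj /(all_map_inl IH)].
  by case: (peval_TFun f j ts) => [[_ ->]|[vs [_ ->]]] //= ->; rewrite Hj.
- by move=> /= /andP[-> /(all_map_inl IH)].
- rewrite [syms_ok P (TEq t u)]/= => /andP[H1 H2].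
  by case: (peval_TEq f t u) => [->|[a [b [_ _ ->]]]] //=; rewrite IH1 ?IH2.
- rewrite [syms_ok P (TAnd t u)]/= => /andP[H1 H2].
  by case: (peval_TAnd f t u) => [->|[a [b [_ _ ->]]]] //=; rewrite IH1 ?IH2.
Qed.

Lemma peval_sort (f : nat -> seq value -> value) e x :
  (forall j vs, map (@sortOf T) vs = (fsig P j).1 -> sortOf (f j vs) = (fsig P j).2) ->
  sort_of P e = Some x -> sort_of P (peval f e) = Some x.
Proof.
move=> f_ok.
elim/term_ind': e x => [v|g ts IH|j ts IH|i ts IH|t u IH1 IH2|t u IH1 IH2] x //.
- rewrite [sort_of P (TApp _ _)]/=; case: eqP => // E [<-].
  have E' := sort_of_map IH E.
  case: (peval_TApp f g ts) => [[_ ->]|[vs [Hvs ->]]] /=; first by rewrite E' eqxx.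
  have Evs : map (@sortOf T) vs = (isig g).1.
    by apply: map_Some_inj; rewrite -E' (getvals_map Hvs) -!map_comp.
  by case: T_ok => _ _ _ ->.
- rewrite [sort_of P (TFun _ _)]/=; case: eqP => // E [<-].
  have E' := sort_of_map IH E.
  case: (peval_TFun f j ts) => [[_ ->]|[vs [Hvs ->]]] /=; first by rewrite E' eqxx.
  have Evs : map (@sortOf T) vs = (fsig P j).1.
    by apply: map_Some_inj; rewrite -E' (getvals_map Hvs) -!map_comp.
  by rewrite f_ok.
- by rewrite /=; case: eqP => // E [<-]; rewrite (sort_of_map IH E) eqxx.
- rewrite [sort_of P (TEq _ _)]/=.
  case E1: (sort_of P t) => [a|] //; case E2: (sort_of P u) => [b|] //.
  case: eqP => // Eab [<-].
  case: (peval_TEq f t u) => [->|[a' [b' [_ _ ->]]]] /=; last by rewrite vbool_sort.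
  by rewrite (IH1 _ E1) (IH2 _ E2) Eab eqxx.
- rewrite [sort_of P (TAnd _ _)]/=; case: ifP => // /andP[/eqP E1 /eqP E2] [<-].
  case: (peval_TAnd f t u) => [->|[a' [b' [_ _ ->]]]] /=; last by rewrite vbool_sort.
  by rewrite (IH1 _ E1) (IH2 _ E2) eqxx.
Qed.

Lemma repl_sort s r e e1 :
  repl1 s r e e1 -> sort_of P s = sort_of P r -> sort_of P e1 = sort_of P e.
Proof.
move=> H Hsr; elim: H => {e e1} //= [g l1 t t' l2 _ IH|j l1 t t' l2 _ IH|
  i l1 t t' l2 _ IH|t t' u _ IH|t u u' _ IH|t t' u _ IH|t u u' _ IH];
  by rewrite ?map_cat /= IH.
Qed.

Lemma repl_syms s r e e1 :
  repl1 s r e e1 -> syms_ok P s = syms_ok P r -> syms_ok P e1 = syms_ok P e.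
Proof.
move=> H Hsr; elim: H => {e e1} //= [g l1 t t' l2 _ IH|j l1 t t' l2 _ IH|
  i l1 t t' l2 _ IH|t t' u _ IH|t u u' _ IH|t t' u _ IH|t u u' _ IH];
  by rewrite ?all_cat /= IH.
Qed.

Lemma occurs_sort s e x :
  occurs s e -> sort_of P e = Some x -> exists y, sort_of P s = Some y.
Proof.
move=> H; elim: H x => {e} [|g ts t Ht _ IH|j ts t Ht _ IH|i ts t Ht _ IH|
                           t u _ IH|t u _ IH|t u _ IH|t u _ IH] x /=.
- by exists x.
- by case: eqP => // E _; have [y] := sort_of_inl Ht E; exact: IH.
- by case: eqP => // E _; have [y] := sort_of_inl Ht E; exact: IH.
- by case: eqP => // E _; have [y] := sort_of_inl Ht E; exact: IH.
- by case E: (sort_of P t) => [a|] //; case: (sort_of P u) => // b _; exact: IH E.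
- by case: (sort_of P t) => // a; case E: (sort_of P u) => [b|] // _; exact: IH E.
- by case: ifP => // /andP[/eqP E _] _; exact: IH E.
- by case: ifP => // /andP[_ /eqP E] _; exact: IH E.
Qed.

Lemma occurs_syms s e : occurs s e -> syms_ok P e -> syms_ok P s.
Proof.
elim=> {e} [|g ts t Ht _ IH|j ts t Ht _ IH|i ts t Ht _ IH|
             t u _ IH|t u _ IH|t u _ IH|t u _ IH] //=.
- by move=> Hts; apply/IH/(inl_all Ht).
- by case/andP=> _ Hts; apply/IH/(inl_all Ht).
- by case/andP=> _ Hts; apply/IH/(inl_all Ht).
all: by case/andP=> *; apply: IH.
Qed.

Lemma ocall_signature i c e :
  well_formed e -> occurs (ocall i c) e ->
  i < nor P /\ map (@sortOf T) c = (osig P i).1.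
Proof.
move=> [He Hsyms] Hocc; split; first by have /andP[] := occurs_syms Hocc Hsyms.
have [y] := occurs_sort Hocc He; rewrite /ocall /=; case: eqP => // E _.
by apply: map_Some_inj; rewrite -E -!map_comp.
Qed.

Lemma well_formed_peval (M : model T) e :
  model_ok P M -> well_formed e -> well_formed (peval (mf M) e).
Proof. by move=> [Mf _] [He Hsyms]; split; [exact: peval_sort | exact: peval_syms]. Qed.

Lemma wf_oracle_step (M : model T) i c d e e1 :
  model_ok P M -> well_formed e -> repl1 (ocall i c) (TVal d) e e1 ->
  sortOf d = (osig P i).2 -> well_formed (peval (mf M) e1).
Proof.
move=> M_ok [He Hsyms] Hr Hd; apply: well_formed_peval => //.
have Hocc := repl_occurs Hr; have [_ Hc] := ocall_signature (conj He Hsyms) Hocc.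
split; last by rewrite (repl_syms Hr) // (occurs_syms Hocc Hsyms).
by rewrite (repl_sort Hr) //= Hd -Hc -!map_comp /= eqxx.
Qed.
End WellFormed.

Section Assumptions.
Variables (T : theory) (P : problem T).
Hypothesis T_ok : theory_ok T.
Local Notation value := (Defs.tval T).
Implicit Types (A : seq (asm T)) (M : model T).

Definition keys A : seq (nat * seq value) := map (fun a => (a.1.1, a.1.2)) A.

Definition asm_ok A : Prop :=
  uniq (keys A) /\ forall a, a \in A ->
    [/\ a.1.1 < nor P, map (@sortOf T) a.1.2 = (osig P a.1.1).1 &
        sortOf a.2 = (osig P a.1.1).2].

Lemma lookupA_None A i c : lookupA A i c = None -> (i, c) \notin keys A.
Proof.
elim: A => [|[[j c'] d] A IH] //=; case: ifP => // /negbT Hne /IH.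
rewrite in_cons negb_or => ->; rewrite andbT.
by apply: contra Hne => /eqP[-> ->]; rewrite !eqxx.
Qed.

Lemma lookupA_Some A i c d : lookupA A i c = Some d -> (i, c, d) \in A.
Proof.
elim: A => [|[[j c'] d'] A IH] //=.
case: ifP => [/andP[/eqP -> /eqP ->] [->]|_ /IH Hin]; first exact: mem_head.
by rewrite in_cons Hin orbT.
Qed.

Lemma asm_ok_rcons A i c d :
  asm_ok A -> lookupA A i c = None -> i < nor P ->
  map (@sortOf T) c = (osig P i).1 -> sortOf d = (osig P i).2 ->
  asm_ok (rcons A (i, c, d)).
Proof.
move=> [Huniq HA] Hnew Hi Hc Hd; split.
- by rewrite /keys map_rcons rcons_uniq Huniq andbT lookupA_None.
- by move=> a; rewrite mem_rcons in_cons => /orP[/eqP -> | /HA].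
Qed.

Lemma asm_size_bound :
  finite_domains P -> exists N, forall A, asm_ok A -> size A <= N.
Proof.
move=> Fin.
have [K HK] : exists K : seq (nat * seq value), forall i c,
    i < nor P -> map (@sortOf T) c = (osig P i).1 -> (i, c) \in K.
  suff Hn n : n <= nor P -> exists K : seq (nat * seq value), forall i c,
      i < n -> map (@sortOf T) c = (osig P i).1 -> (i, c) \in K by exact: Hn.
  elim: n => [|n IH] Hn; first by exists [::].
  have [K HK] := IH (ltnW Hn); have [D HD] := Fin n Hn.
  exists (K ++ map (pair n) D) => i c; rewrite ltnS leq_eqVlt mem_cat.
  case/orP=> [/eqP -> Hc | Hi Hc]; last by rewrite HK.
  by rewrite (map_f _ (HD c Hc)) orbT.
exists (size K) => A [Huniq HA]; rewrite -(size_map (fun a => (a.1.1, a.1.2))).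
apply: (uniq_leq_size Huniq) => _ /mapP[a Ha ->].
by have [Hi Hc _] := HA a Ha; apply: HK.
Qed.

Lemma rho_and_sort A :
  sort_of P (rho P) = Some (tsB T) -> asm_ok A -> sort_of P (rho_and P A) = Some (tsB T).
Proof.
move=> Hrho [_ HA]; rewrite /rho_and.
elim: A (rho P) Hrho HA => [|a A IH] acc //= Hacc HA.
apply: IH => [|b Hb]; last by apply: HA; rewrite in_cons Hb orbT.
have [_ Hc Hd] := HA a (mem_head _ _).
have Eargs : map (sort_of P) (map TVal a.1.2) = map Some (osig P a.1.1).1.
  by rewrite -Hc -!map_comp.
by rewrite [sort_of P (TAnd _ _)]/= Hacc /= Eargs Hd !eqxx.
Qed.

Definition agrees M A : Prop := forall a, a \in A -> mo M a.1.1 a.1.2 = a.2.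

Lemma rho_and_model M A :
  eval M (rho_and P A) = tvtt T -> eval M (rho P) = tvtt T /\ agrees M A.
Proof.
rewrite /rho_and; elim: A (rho P) => [|a A IH] acc //= /IH[Hand HA].
have /andP[/eqP Hacc /eqP Ha] := vbool_tt T_ok Hand.
have /eqP Hd := vbool_tt T_ok Ha.
split=> // b; rewrite in_cons => /orP[/eqP -> | /HA //].
by rewrite -Hd -eval_ocall.
Qed.
End Assumptions.

Section Termination.
Variables (T : theory) (P : problem T) (solver : term T -> option (model T)).
Hypotheses (T_ok : theory_ok T) (P_ok : problem_ok P) (solver_ok : solver_spec P solver).

Local Notation finite_runs s := (Acc (fun s2 s1 => step P solver s1 s2) s).

Lemma returned_finite_runs s :
  (forall s', ~ step P solver s s') -> finite_runs s.
Proof. by move=> Hstop; constructor=> s' /Hstop. Qed.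

(* The while-loop of step 3 in the iteration started with assumptions A and
   solver model M.  It terminates, since every transition decreases the
   number of oracle applications in mu; and it can only go back to step 1
   (with assumptions A') if A has grown: while no oracle has been called,
   M agrees with every assumption used and mu stays true in M, so the final
   value mu is true.  The current formula is written peval (mf M) x since
   mu is always the result of a partial evaluation. *)
Section InnerLoop.
Variables (A : seq (asm T)) (M : model T).
Hypotheses (M_ok : model_ok P M) (M_agrees : agrees M A).
Hypothesis outer_finite :
  forall A', asm_ok P A' -> size A < size A' -> finite_runs (Outer A').

Lemma inner_finite_runs A' x :
  asm_ok P A' -> well_formed P (peval (mf M) x) ->
  size A < size A' \/ (A' = A /\ eval M x = tvtt T) ->
  finite_runs (Inner A' M (peval (mf M) x)).
Proof.
have [n] := ubnP (ocount (peval (mf M) x)); elim: n A' x => [|n IHn] A' x;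
  first by rewrite ltn0.
move=> Hlt HA' Hwf Hprogress; constructor=> s Hs.
inversion Hs as [| |? ? ? e i c d Hknown Hr|? ? ? e i c Hnew Hr|
                  ? ? ? Hno Htt|? ? ? Hno Hntt]; subst.
- have [_ _ Hd] := HA'.2 _ (lookupA_Some Hknown).
  apply: IHn => //.
  + by have := ocount_step (mf M) Hr; lia.
  + exact: wf_oracle_step Hwf Hr Hd.
  + case: Hprogress => [|[EA Hx]]; [by left | right; split=> //].
    rewrite (repl_eval Hr) ?peval_eval // eval_ocall /=.
    by apply: (M_agrees (lookupA_Some _)); rewrite -EA.
- have [Hi Hc] := ocall_signature Hwf (repl_occurs Hr).
  have [_ _ oracle_sort] := P_ok; have Hd := oracle_sort i c Hi Hc.
  apply: IHn.
  + by have := ocount_step (mf M) Hr; lia.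
  + exact: asm_ok_rcons.
  + exact: wf_oracle_step Hwf Hr Hd.
  + left; rewrite size_rcons ltnS.
    by case: Hprogress => [/ltnW | [-> _]].
- by apply: returned_finite_runs => s' Hs'; inversion Hs'.
- case: Hprogress => [|[EA Hx]]; first exact: outer_finite.
  have [v Hv] := peval_value Hno.
  by case: Hntt; rewrite Hv -Hx -peval_eval Hv.
Qed.
End InnerLoop.

(* The outer loop terminates: its assumption list has bounded length and
   grows strictly between two visits of step 1. *)
Lemma outer_finite_runs :
  finite_domains P -> forall A, asm_ok P A -> finite_runs (Outer A).
Proof.
move=> Fin; have [N HN] := asm_size_bound Fin.
move=> A; have [n] := ubnP (N - size A); elim: n A => [|n IHn] A;
  first by rewrite ltn0.
move=> Hlt HA.
have [Hrho Hsyms _] := P_ok.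
constructor=> s Hs; inversion Hs as [? Hunsat|? M Hsat| | | |]; subst.
  by apply: returned_finite_runs => s' Hs'; inversion Hs'.
have [M_ok HM] := (solver_ok (rho_and_sort Hrho HA)).2 M Hsat.
have [Mrho M_agrees] := rho_and_model T_ok HM.
apply: (inner_finite_runs M_ok M_agrees).
- move=> A' HA' Hsize; apply: (IHn A' _ HA').
  by have := HN A' HA'; lia.
- exact: HA.
- exact: well_formed_peval.
- by right.
Qed.
End Termination.

Theorem mainTheorem3 (T : theory) (P : problem T)
    (solver : term T -> option (model T)) :
  theory_ok T ->
  problem_ok P ->
  solver_spec P solver ->
  finite_domains P ->
  terminates P solver.
Proof.
move=> T_ok P_ok solver_ok Fin.
by apply: (outer_finite_runs T_ok P_ok solver_ok Fin); split.
Qed.
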